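(* Let $w$ be a perfectly clustering word over a totally ordered alphabet having a palindromic special factorization $w=a_1\pi_1a_2\pi_2\cdots\pi_{k-1}a_k$. Then for every $s\in\{1,\dots,k-1\}$, the word $\pi_s$ is empty if and only if $|w|_{a_1}+\cdots+|w|_{a_s}=|w|_{a_{s+1}}+\cdots+|w|_{a_k}$.
   Context: $|w|_a$ is the number of occurrences of the letter $a$ in $w$. A special factorization of $w$ is a factorization $w=a_1\pi_1a_2\cdots\pi_{k-1}a_k$ where the set of letters occurring in $w$ is $\{a_1<\cdots<a_k\}$ and $\pi_1,\dots,\pi_{k-1}$ are words; it is palindromic if every $\pi_i$ is a palindrome. Lexicographic order: a proper prefix is smaller. For a primitive word $v$ of length $n$ with conjugates $v_1<\cdots<v_n$, $\mathrm{bw}(v)$ is the word formed by the last letters of $v_1,\dots,v_n$; $v$ is perfectly clustering if it is primitive and $\mathrm{bw}(v)$ is weakly decreasing. *)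

From HB Require Import structures.
From mathcomp Require Import all_boot all_order.
Set Implicit Arguments.
Unset Strict Implicit.
Unset Printing Implicit Defensive.
Import Order.TTheory.
Local Open Scope order_scope.

Section Words.
Variables (d : Order.disp_t) (T : orderType d).

Definition occ (w : seq T) (x : T) : nat := count_mem x w.

Fixpoint lexle (u v : seq T) : bool :=
  match u, v with
  | [::], _ => true
  | _ :: _, [::] => false
  | x :: u', y :: v' => (x < y) || ((x == y) && lexle u' v')
  end.

Definition wpow (u : seq T) (k : nat) : seq T := flatten (nseq k u).

(* primitive: not a power u^k of a word u with k >= 2 (so in particular nonempty) *)
Definition primitive (v : seq T) : Prop :=
  ~ (exists (u : seq T) (k : nat), 1 < k /\ v = wpow u k).

Definition conjugates (v : seq T) : seq (seq T) :=
  [seq rot i v | i <- iota 0 (size v)].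

(* bw(v): last letters of the lexicographically sorted conjugates.
   (For nonempty v = x :: _, every conjugate is nonempty, so last x u is
   the last letter of u.) *)
Definition bw (v : seq T) : seq T :=
  match v with
  | [::] => [::]
  | x :: _ => [seq last x u | u <- sort lexle (conjugates v)]
  end.

Definition perfectly_clustering (v : seq T) : Prop :=
  primitive v /\ sorted (fun x y : T => y <= x) (bw v).

(* a = [:: a_1; ...; a_k], pis = [:: pi_1; ...; pi_{k-1}] is a special
   factorization w = a_1 pi_1 a_2 ... pi_{k-1} a_k, where
   {a_1 < ... < a_k} is the set of letters occurring in w. *)
Definition special_factorization (w : seq T) (a : seq T) (pis : seq (seq T)) : Prop :=
  [/\ sorted (fun x y : T => x < y) a,
      (forall x : T, (x \in w) = (x \in a)),
      size pis = (size a).-1 &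
      match a with
      | [::] => False
      | a1 :: a' => w = a1 :: flatten [seq p.1 ++ [:: p.2] | p <- zip pis a']
      end].

Definition palindromic_factors (pis : seq (seq T)) : Prop :=
  forall p, p \in pis -> p = rev p.

End Words.

From mathcomp Require Import all_boot all_order.
From mathcomp Require Import zify.
Set Implicit Arguments.
Unset Strict Implicit.
Unset Printing Implicit Defensive.
Import Order.TTheory.

(* Let r(m) be the lexicographic rank of the conjugate [rot m w] among the
   conjugates of w; as w is primitive, r is a permutation of {0, ..., |w|-1}.
   Perfect clustering means that moving the first letter x of a conjugate to
   its end keeps the relative order of the conjugates starting with x, puts
   those starting with a larger letter below and those starting with a smaller
   letter above; hence r(m+1) = r(m) + #{y > x} - #{y < x} (letters y of w,
   x = w_m).  If a_i pi_i a_(i+1) occupies the positions p..q of w and pi_i is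
   a palindrome, the increments along pi_i are symmetric, so the ranks r(p+1),
   ..., r(q) pair up to the constant r(p+1) + r(q), which is at least |w|
   because a_i < a_(i+1).  Summing over all segments and comparing with
   0 + 1 + ... + (|w|-1) forces r(p+1) + r(q) = |w|, whence
   r(p+1) = #{y > a_i} and r(q) = #{y <= a_i}.  Finally pi_i is empty iff
   q = p+1 iff these two ranks coincide. *)

Section Lexicographic.
Variables (d : Order.disp_t) (T : orderType d).
Implicit Types u v s : seq T.

Lemma lexleE u v : lexle u v = (u <= v :> seqlexi T)%O.
Proof. by elim: u v => [|x u IH] [|y v] //=; rewrite lexi_cons IH; case: ltgtP. Qed.

Lemma ltxi_cat2r u v s : size u = size v ->
  (u ++ s < v ++ s :> seqlexi T)%O = (u < v :> seqlexi T)%O.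
Proof.
by elim: u v => [|x u IH] [|y v] //= [/IH ltxi_uv]; rewrite !ltxi_cons ltxi_uv.
Qed.

End Lexicographic.

Section Rank.
Variables (d : Order.disp_t) (S : orderType d) (s : seq S).

Lemma count_lt_homo x y : x \in s -> (x < y)%O -> count (< x)%O s < count (< y)%O s.
Proof.
move=> xs lt_xy.
have disj : count (predI (< x)%O (pred1 x)) s = 0.
  rewrite (@eq_count _ _ pred0) ?count_pred0 // => z /=.
  by case: eqP => [->|]; rewrite ?ltxx ?andbF.
have /leq_trans-> // : count (< x)%O s < count (predU (< x)%O (pred1 x)) s.
  have := count_predUI (< x)%O (pred1 x) s; rewrite disj addn0 => ->.
  by rewrite -addn1 leq_add2l -has_count; apply/hasP; exists x => /=.
by apply: sub_count => z /orP[/lt_trans/(_ lt_xy) | /eqP->].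
Qed.

Lemma count_lt_inj : {in s &, injective (fun x => count (< x)%O s)}.
Proof.
move=> x y xs ys /= E.
by case: (ltgtP x y) => // [/(count_lt_homo xs) | /(count_lt_homo ys)]; rewrite E ltnn.
Qed.

Lemma count_lt_size x : x \in s -> count (< x)%O s < size s.
Proof.
move=> xs; rewrite -(count_predC (< x)%O) -addn1 leq_add2l -has_count.
by apply/hasP; exists x => //=; rewrite ltxx.
Qed.

Lemma perm_count_lt_iota : uniq s ->
  perm_eq [seq count (< x)%O s | x <- s] (iota 0 (size s)).
Proof.
move=> s_uniq; have ranks_uniq : uniq [seq count (< x)%O s | x <- s].
  by rewrite (map_inj_in_uniq count_lt_inj).
apply: (uniq_perm ranks_uniq (iota_uniq 0 _)).
have ranks_sub : {subset [seq count (< x)%O s | x <- s] <= iota 0 (size s)}.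
  by move=> _ /mapP[x xs ->]; rewrite mem_iota count_lt_size.
by apply: (uniq_min_size ranks_uniq ranks_sub _).2; rewrite size_map size_iota.
Qed.

End Rank.

Lemma sorted_le_map_homo (d : Order.disp_t) (S : porderType d) (R : Type)
    (leR : rel R) (f : S -> R) (s : seq S) :
  reflexive leR -> transitive leR -> sorted <=%O s -> sorted leR (map f s) ->
  {in s &, {homo f : x y / (x <= y)%O >-> leR x y}}.
Proof.
move=> leR_refl leR_tr s_sorted fs_sorted x y xs ys le_xy.
have ltn_idx z : z \in s -> index z s < size s by rewrite index_mem.
case: (leqP (index x s) (index y s)) => [le_ij | lt_ji].
  have := sorted_leq_nth leR_tr leR_refl (f x) fs_sorted.
  move=> /(_ (index x s) (index y s)); rewrite !inE size_map !ltn_idx //.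
  by rewrite !(nth_map x) ?ltn_idx // !nth_index //; apply.
have := sorted_ltn_nth le_trans x s_sorted (index y s) (index x s).
rewrite !inE !ltn_idx // !nth_index // => /(_ isT isT lt_ji) le_yx.
by rewrite (@le_anti _ _ x y) ?le_xy.
Qed.

Lemma eq_in_count_add (T : eqType) (a b c e : pred T) (s : seq T) :
  {in s, forall x, a x + b x = c x + e x} ->
  count a s + count b s = count c s + count e s.
Proof.
elim: s => //= x s IH abce.
have abce_s : {in s, forall z, a z + b z = c z + e z}.
  by move=> z zs; apply: abce; rewrite inE zs orbT.
have := abce x (mem_head x s); have := IH abce_s; lia.
Qed.

Lemma count_le_gt (d : Order.disp_t) (S : orderType d) (x : S) (s : seq S) :
  count (<= x)%O s + count (> x)%O s = size s.
Proof.
by rewrite -(count_predC (<= x)%O); congr (_ + _); apply: eq_count => y /=; rewrite ltNge.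
Qed.

Lemma leq_sum_eq (I : finType) (E1 E2 : I -> nat) :
  (forall i, E1 i <= E2 i) -> \sum_i E2 i <= \sum_i E1 i -> forall i, E1 i = E2 i.
Proof.
move=> le12 le21 i; have le_sums := @leqif_sum _ predT _ _ _ (fun j _ => leqif_eq (le12 j)).
have /forallP/(_ i)/eqP // : [forall j, E1 j == E2 j].
by rewrite -le_sums.2 eqn_leq le_sums.1.
Qed.

Lemma big_nat_chain (R : Type) (idx : R) (op : Monoid.law idx) (P : nat -> nat) k F :
  (forall i, i < k -> P i <= P i.+1) ->
  \big[op/idx]_(i < k) \big[op/idx]_(P i <= m < P i.+1) F m
    = \big[op/idx]_(P 0 <= m < P k) F m.
Proof.
elim: k => [|k IH] P_mono; first by rewrite big_ord0 big_geq.
have P0_le j : j <= k -> P 0 <= P j.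
  elim: j => // j IHj lt_jk; exact: leq_trans (IHj (ltnW lt_jk)) (P_mono j (leqW lt_jk)).
rewrite big_ord_recr IH /= => [|i lt_ik]; last exact/P_mono/leqW.
by rewrite -big_cat_nat ?P0_le ?P_mono.
Qed.

Lemma rot_gcdn (T : Type) (v : seq T) a b : a <= size v -> b <= size v ->
  rot a v = v -> rot b v = v -> rot (gcdn a b) v = v.
Proof.
have [N] := ubnP (a + b); elim: N a b => // N IH a b.
wlog le_ab : a b / a <= b => [Hwlog | ltN a_le b_le ra rb].
  by case: (leqP a b) => [|/ltnW] ? ? ? ? ? ?; [|rewrite gcdnC]; apply: Hwlog; rewrite // addnC.
have [-> | a_gt0] := posnP a; first by rewrite gcd0n.
have rba : rot (b - a) v = v by rewrite -{1}ra -rotD subnK.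
by rewrite -(subnK le_ab) gcdnDr; apply: IH => //; lia.
Qed.

Section PrimitiveWords.
Variables (d : Order.disp_t) (T : orderType d).
Implicit Types u v z : seq T.

Lemma commute_wpow m u z : size z = m * size u -> z ++ u = u ++ z -> z = wpow u m.
Proof.
elim: m z => [|m IH] z /=; first by move/size0nil.
rewrite mulSn => size_z zu_uz.
have take_z : take (size u) z = u.
  by have := congr1 (take (size u)) zu_uz; rewrite takel_cat ?size_z ?leq_addr // take_size_cat.
rewrite -(cat_take_drop (size u) z) take_z in size_z zu_uz *; congr (_ ++ _).
apply: IH; first by move: size_z; rewrite size_cat => /addnI.
by move: zu_uz; rewrite -catA => /(congr1 (drop (size u))); rewrite !drop_size_cat.
Qed.

Lemma primitive_size_gt0 v : primitive v -> 0 < size v.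
Proof. by case: v => // prim; case: prim; exists [::], 2. Qed.

Lemma primitive_rot_neq v k : primitive v -> 0 < k < size v -> rot k v != v.
Proof.
move=> prim /andP[k_gt0 k_lt]; apply/eqP => rkv; apply: prim.
set g := gcdn k (size v).
have rgv : rot g v = v by apply: rot_gcdn; rewrite ?rot_size // ltnW.
have g_gt0 : 0 < g by rewrite gcdn_gt0 k_gt0.
have g_lt : g < size v by apply: leq_ltn_trans k_lt; apply: dvdn_leq (dvdn_gcdl _ _).
have [q size_v] : exists q, size v = q.+2 * g.
  move: (divnK (dvdn_gcdr k (size v))); rewrite -/g.
  by case: (size v %/ g) => [|[|q]] def_v; [lia | lia | exists q].
exists (take g v), q.+2; split => //.
have size_tg : size (take g v) = g by rewrite size_take g_lt.
rewrite -{1}(cat_take_drop g v) (@commute_wpow q.+1 (take g v) (drop g v)) //.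
  by rewrite size_drop size_tg size_v; lia.
by rewrite -rot_size_cat size_tg !cat_take_drop rgv.
Qed.

Lemma primitive_rot_inj v i j : primitive v -> i < size v -> j < size v ->
  rot i v = rot j v -> i = j.
Proof.
move=> prim; wlog le_ij : i j / i <= j => [Hwlog i_lt j_lt E|i_lt j_lt E].
  by case: (leqP i j) => [|/ltnW] ?; [|symmetry]; apply: Hwlog.
apply/eqP; rewrite eqn_leq le_ij /= leqNgt; apply/negP => lt_ij.
have /negP[] := @primitive_rot_neq v (j - i) prim ltac:(lia).
by apply/eqP/(@rot_inj i); rewrite rot_rot -rotD subnK ?E // ltnW.
Qed.

End PrimitiveWords.

Section Conjugates.
Variables (d : Order.disp_t) (T : orderType d) (w : seq T).
Local Notation n := (size w).
Local Notation C := (conjugates w).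

Lemma size_conjugates : size C = n.
Proof. by rewrite size_map size_iota. Qed.

Lemma mem_conjugates m : m < n -> rot m w \in C.
Proof. by move=> lt_mn; apply: map_f; rewrite mem_iota. Qed.

Lemma conjugatesP v : v \in C -> exists2 m, m < n & v = rot m w.
Proof. by case/mapP => m; rewrite mem_iota => /andP[_ lt_mn] ->; exists m. Qed.

Lemma size_mem_conjugates v : v \in C -> size v = n.
Proof. by case/conjugatesP => m _ ->; rewrite size_rot. Qed.

Lemma head_rot x0 m : m < n -> head x0 (rot m w) = nth x0 w m.
Proof. by move=> lt_mn; rewrite /rot (drop_nth x0 lt_mn). Qed.

Lemma count_head_conjugates (P : pred T) x0 :
  count (fun v => P (head x0 v)) C = count P w.
Proof.
rewrite count_map -[in RHS](mkseq_nth x0 w) count_map.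
by apply: eq_in_count => m; rewrite mem_iota => /andP[_ lt_mn] /=; rewrite head_rot.
Qed.

Lemma map_rot1_conjugates : map (rot 1) C = rot 1 C.
Proof.
rewrite /conjugates -map_comp -map_rot; case size_w: (size w) => [//|n'].
transitivity [seq rot i w | i <- iota 1 n'.+1].
  rewrite (iotaDl 1 0) -map_comp; apply/eq_in_map => i.
  by rewrite mem_iota add0n -size_w /= add1n => /rotS <-.
rewrite -[iota 0 n'.+1]/(0 :: iota 1 n') rot1_cons map_rcons -cats1 -[n'.+1]addn1 iotaD map_cat.
by congr (_ ++ _); rewrite /= rot0 add1n -size_w rot_size.
Qed.

Definition conj_rank m := count (fun v => (v < rot m w :> seqlexi T)%O) C.

Lemma conj_rank_ge x0 m : m < n -> count (< nth x0 w m)%O w <= conj_rank m.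
Proof.
move=> lt_mn; rewrite -(count_head_conjugates _ x0) -(head_rot x0 lt_mn).
apply: sub_count => v /=; have := size_rot m w.
case: (rot m w) => [|x u]; first by move=> size_w; move: lt_mn; rewrite -size_w.
by case: v => [|y v] //= _ lt_yx; rewrite neqhead_ltxiE // lt_eqF.
Qed.

Section Primitive.
Hypothesis w_prim : primitive w.

Lemma conjugates_uniq : uniq C.
Proof.
rewrite map_inj_in_uniq ?iota_uniq // => i j.
by rewrite !mem_iota => /andP[_ lt_i] /andP[_ lt_j]; apply: primitive_rot_inj.
Qed.

Lemma conj_rank_inj m1 m2 : m1 < n -> m2 < n -> conj_rank m1 = conj_rank m2 -> m1 = m2.
Proof.
move=> lt1 lt2 /(@count_lt_inj _ (seqlexi T) C _ _ (mem_conjugates lt1) (mem_conjugates lt2)).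
exact: primitive_rot_inj.
Qed.

Lemma sum_conj_rank : \sum_(0 <= m < n) conj_rank m = 'C(n, 2).
Proof.
rewrite -bin2_sum /index_iota subn0 -[in RHS]size_conjugates.
by rewrite -(perm_big _ (@perm_count_lt_iota _ (seqlexi T) C conjugates_uniq)) !big_map.
Qed.

End Primitive.
End Conjugates.

Definition palindromic_between (T : Type) (x0 : T) (w : seq T) (p q : nat) :=
  forall t, 0 < t < q - p -> nth x0 w (p + t) = nth x0 w (q - t).

Section PerfectlyClustering.
Variables (d : Order.disp_t) (T : orderType d) (w : seq T).
Hypothesis w_pc : perfectly_clustering w.
Local Notation n := (size w).
Local Notation C := (conjugates w).
Variable x0 : T.
Local Notation rk := (conj_rank w).

Lemma conjugates_last_anti u v : u \in C -> v \in C ->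
  (last x0 u < last x0 v)%O -> (v < u :> seqlexi T)%O.
Proof.
case: w_pc => _; rewrite /bw; case: w => [|x w'] bw_sorted u_C v_C.
  by case/conjugatesP: u_C.
have last_x z : z \in conjugates (x :: w') -> last x0 z = last x z.
  by move/size_mem_conjugates; case: z.
rewrite !last_x // => lt_last; rewrite ltNge; apply: contraL lt_last => le_uv; rewrite -leNgt.
have lex_sorted : sorted <=%O (sort (@lexle _ T) (conjugates (x :: w')) : seq (seqlexi T)).
  rewrite -(@eq_sorted _ (@lexle _ T)) => [|p q]; last exact: lexleE.
  by apply: sort_sorted => p q; rewrite !lexleE le_total.
apply: (sorted_le_map_homo _ _ lex_sorted bw_sorted) => //; rewrite ?mem_sort //.
by move=> p q r /= le_qp le_rq; apply: le_trans le_rq le_qp.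
Qed.

Lemma ltxi_rot1 u v : u \in C -> v \in C ->
  (rot 1 v < rot 1 u :> seqlexi T)%O + (head x0 v < head x0 u)%O
  = (v < u :> seqlexi T)%O + (head x0 u < head x0 v)%O.
Proof.
have rot1_C z : z \in C -> rot 1 z \in C.
  by move=> zC; rewrite -(mem_rot 1) -map_rot1_conjugates map_f.
move=> u_C v_C; have := conjugates_last_anti (rot1_C _ u_C) (rot1_C _ v_C).
have := conjugates_last_anti (rot1_C _ v_C) (rot1_C _ u_C).
move: u_C v_C (size_mem_conjugates u_C) (size_mem_conjugates v_C).
case: u => [|x u] _ _; first by move=> <- /size0nil-> _ _; rewrite /= !ltxx.
case: v => [|y v] size_u size_v; first by move: size_u; rewrite -size_v.
rewrite /= !rot1_cons !last_rcons.
case: (ltgtP x y) => [lt_xy|lt_yx|<-] lt_vu lt_uv.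
- by rewrite lt_uv // neqhead_ltxiE ?(gt_eqF lt_xy) // ltNge (ltW lt_xy).
- by rewrite (lt_gtF (lt_vu isT)) neqhead_ltxiE ?(lt_eqF lt_yx) // lt_yx.
- rewrite eqhead_ltxiE -!cats1 ltxi_cat2r //.
  by move: size_u size_v => /= <- [].
Qed.

Lemma conj_rank_succ m : m.+1 < n ->
  rk m.+1 + count (< nth x0 w m)%O w = rk m + count (> nth x0 w m)%O w.
Proof.
move=> lt_m1n; have lt_mn := ltnW lt_m1n.
have rot_C : perm_eq (rot 1 C) C by rewrite perm_rot.
rewrite /conj_rank (rotS lt_mn) -(permP rot_C) -map_rot1_conjugates count_map.
rewrite -(head_rot x0 lt_mn) -!(count_head_conjugates w _ x0).
by apply: eq_in_count_add => v v_C; apply: ltxi_rot1 (mem_conjugates lt_mn) v_C.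
Qed.

Lemma conj_rank_mirror p q : q < n -> palindromic_between x0 w p q ->
  forall t, t < q - p -> rk (p + t).+1 + rk (q - t) = rk p.+1 + rk q.
Proof.
move=> lt_qn pal; elim=> [|t IH] lt_t; first by rewrite addn0 subn0.
have step_l := conj_rank_succ (m := p + t.+1) ltac:(lia).
have step_r := conj_rank_succ (m := q - t.+1) ltac:(lia).
rewrite -pal in step_r; last by lia.
have succ_qt : (q - t.+1).+1 = q - t by lia.
rewrite succ_qt !addnS in step_l step_r *; have := IH (ltnW lt_t); lia.
Qed.

Lemma sum_conj_rank_between p q : q < n -> palindromic_between x0 w p q ->
  2 * \sum_(p.+1 <= m < q.+1) rk m = (q - p) * (rk p.+1 + rk q).
Proof.
move=> lt_qn pal; rewrite mul2n -addnn {2}big_nat_rev -big_split /= -subSS.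
rewrite -sum_nat_const_nat; apply: eq_big_nat => m /andP[lt_pm le_mq].
have := conj_rank_mirror lt_qn pal (t := m - p.+1) ltac:(lia).
have -> : (p + (m - p.+1)).+1 = m by lia.
by have -> : q - (m - p.+1) = p.+1 + q.+1 - m.+1 by lia.
Qed.

Lemma conj_rank_between_ge p q : p < q -> q < n -> (nth x0 w p < nth x0 w q)%O ->
  count (> nth x0 w p)%O w <= rk p.+1 /\ count (<= nth x0 w p)%O w <= rk q.
Proof.
move=> lt_pq lt_qn lt_letters; split.
  have := conj_rank_succ (leq_ltn_trans lt_pq lt_qn).
  have := conj_rank_ge x0 (ltn_trans lt_pq lt_qn); lia.
apply: leq_trans (conj_rank_ge x0 lt_qn).
by apply: sub_count => y /= le_y; apply: le_lt_trans le_y lt_letters.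
Qed.

Section Chain.
Variables (P : nat -> nat) (k : nat).
Hypotheses (P0 : P 0 = 0) (Pk : P k = n.-1).
Hypothesis segment : forall i, i < k ->
  [/\ P i < P i.+1, (nth x0 w (P i) < nth x0 w (P i.+1))%O
     & palindromic_between x0 w (P i) (P i.+1)].

Let n_gt0 : 0 < n := primitive_size_gt0 w_pc.1.

Lemma chain_lt_size i : i <= k -> P i < n.
Proof.
have P_le : {in [pred i | i <= k] &, {homo P : i j / i <= j}}.
  apply: homo_leq_in => [x|y x z|i' j _ /= le_jk m /andP[_ lt_mj]|i' _ /= lt_ik].
  - exact: leqnn.
  - exact: leq_trans.
  - exact: leq_trans (ltnW lt_mj) le_jk.
  - by case: (segment lt_ik) => /ltnW.
by move=> le_ik; rewrite -(prednK n_gt0) ltnS -Pk P_le ?inE.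
Qed.

Lemma sum_conj_rank_chain :
  \sum_(i < k) (P i.+1 - P i) * (rk (P i).+1 + rk (P i.+1)) = 2 * \sum_(1 <= m < n) rk m.
Proof.
transitivity (2 * \sum_((P 0).+1 <= m < (P k).+1) rk m); last by rewrite P0 Pk prednK.
rewrite -(@big_nat_chain _ _ _ (fun i => (P i).+1)) => [|i /segment[/ltnW //]].
rewrite big_distrr /=; apply: eq_bigr => [[i lt_ik]] _ /=.
by rewrite sum_conj_rank_between ?chain_lt_size //; case: (segment lt_ik).
Qed.

Lemma conj_rank_chain_ge i : i < k ->
  count (> nth x0 w (P i))%O w <= rk (P i).+1 /\ count (<= nth x0 w (P i))%O w <= rk (P i.+1).
Proof.
move=> lt_ik; have [lt_P lt_letters _] := segment lt_ik.
exact: conj_rank_between_ge lt_P (chain_lt_size lt_ik) lt_letters.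
Qed.

Lemma conj_rank_chain_sum i : i < k -> rk (P i).+1 + rk (P i.+1) = n.
Proof.
(* Segment j contributes at least (P j.+1 - P j) * n, and these lower bounds
   already add up to n * n.-1, the largest possible total. *)
have n_le (j : 'I_k) :
    (P j.+1 - P j) * n <= (P j.+1 - P j) * (rk (P j).+1 + rk (P j.+1)).
  have [ge_gt ge_le] := conj_rank_chain_ge (ltn_ord j).
  by rewrite leq_mul2l -{1}(count_le_gt (nth x0 w (P j))) addnC leq_add ?orbT.
have sum_len : \sum_(j < k) (P j.+1 - P j) * n = n * n.-1.
  rewrite -big_distrl /= -(big_mkord xpredT (fun j => P j.+1 - P j)) telescope_sumn_in //.
    by rewrite P0 Pk subn0 mulnC.
  by move=> j /andP[_ /segment[/ltnW]].
have sum_rk : 2 * \sum_(1 <= m < n) rk m <= n * n.-1.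
  rewrite -[n.-1]bin1 mul_bin_diag -(sum_conj_rank w_pc.1) leq_mul2l.
  by rewrite [X in _ <= X](big_ltn n_gt0) leq_addl orbT.
have sum_le : \sum_(j < k) (P j.+1 - P j) * (rk (P j).+1 + rk (P j.+1))
              <= \sum_(j < k) (P j.+1 - P j) * n by rewrite sum_len sum_conj_rank_chain.
move=> lt_ik; have /eqP := leq_sum_eq n_le sum_le (Ordinal lt_ik).
by rewrite eqn_pmul2l ?subn_gt0 1?eq_sym => [/eqP|]; [|case: (segment lt_ik)].
Qed.

Lemma conj_rank_chain i : i < k ->
  rk (P i).+1 = count (> nth x0 w (P i))%O w /\ rk (P i.+1) = count (<= nth x0 w (P i))%O w.
Proof.
move=> lt_ik; have [ge_gt ge_le] := conj_rank_chain_ge lt_ik.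
have := conj_rank_chain_sum lt_ik; have := count_le_gt (nth x0 w (P i)) w; lia.
Qed.

End Chain.

End PerfectlyClustering.

(* The position in w of the letter a_(j+1) of w = a_1 pi_1 a_2 ... pi_(k-1) a_k. *)
Definition factor_pos (T : Type) (pis : seq (seq T)) (j : nat) :=
  j + sumn (map size (take j pis)).

Section FactorPositions.
Variables (d : Order.disp_t) (T : orderType d).
Variables (w : seq T) (a1 : T) (a' : seq T) (pis : seq (seq T)).
Hypothesis size_pis : size pis = size a'.
Hypothesis def_w : w = a1 :: flatten [seq p.1 ++ [:: p.2] | p <- zip pis a'].
Local Notation pos := (factor_pos pis).

Lemma factor_pos_succ j : j < size a' -> pos j.+1 = pos j + (size (nth [::] pis j)).+1.
Proof.
move=> lt_j; rewrite /factor_pos (take_nth [::]) ?size_pis //.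
by rewrite map_rcons sumn_rcons addnA addSn addnS.
Qed.

Lemma factor_pos_succ_eq j : j < size a' ->
  (pos j.+1 == (pos j).+1) = (nth [::] pis j == [::]).
Proof.
by move=> lt_j; rewrite factor_pos_succ // addnS eqSS -{2}[pos j]addn0 eqn_add2l size_eq0.
Qed.

Lemma drop_factor_pos j : j <= size a' ->
  drop (pos j) w = nth a1 (a1 :: a') j :: flatten [seq p.1 ++ [:: p.2] | p <- drop j (zip pis a')].
Proof.
elim: j => [|j IH] le_j; first by rewrite /factor_pos take0 /= drop0 def_w.
have lt_jz : j < size (zip pis a') by rewrite size_zip size_pis minnn.
rewrite factor_pos_succ // [pos j + _]addnC -drop_drop (IH (ltnW le_j)) (drop_nth ([::], a1) lt_jz).
by rewrite nth_zip //= -catA drop_size_cat.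
Qed.

Lemma drop_factor_pos_cons j : j < size a' ->
  drop (pos j) w = nth a1 (a1 :: a') j :: nth [::] pis j ++ drop (pos j.+1) w.
Proof.
move=> lt_j; have lt_jz : j < size (zip pis a') by rewrite size_zip size_pis minnn.
rewrite !drop_factor_pos ?(ltnW lt_j) // (drop_nth ([::], a1) lt_jz) /= nth_zip //=.
by rewrite -catA.
Qed.

Lemma factor_pos_lt j : j <= size a' -> pos j < size w.
Proof. by move=> le_j; have := congr1 size (drop_factor_pos le_j); rewrite size_drop /=; lia. Qed.

Lemma factor_pos_last : pos (size a') = (size w).-1.
Proof.
have := congr1 size (drop_factor_pos (leqnn _)).
by rewrite size_drop drop_oversize ?size_zip ?size_pis ?minnn //=; lia.
Qed.

Lemma nth_factor_pos x0 j : j <= size a' -> nth x0 w (pos j) = nth a1 (a1 :: a') j.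
Proof. by move=> le_j; rewrite -[pos j]addn0 -nth_drop drop_factor_pos. Qed.

Lemma palindromic_between_factor_pos x0 j : j < size a' ->
  nth [::] pis j = rev (nth [::] pis j) -> palindromic_between x0 w (pos j) (pos j.+1).
Proof.
move=> lt_j pal_j t; rewrite factor_pos_succ // => /andP[t_gt0 lt_t].
set pi := nth [::] pis j in pal_j lt_t *.
have nth_pi i : i < size pi -> nth x0 w (pos j + i.+1) = nth x0 pi i.
  by move=> lt_i; rewrite -nth_drop drop_factor_pos_cons //= nth_cat lt_i.
have -> : pos j + (size pi).+1 - t = pos j + (size pi - t).+1 by lia.
rewrite -(prednK t_gt0) !nth_pi ?(prednK t_gt0); try lia.
by rewrite {1}pal_j nth_rev; [congr nth; lia | lia].
Qed.

End FactorPositions.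

Section SortedAlphabet.
Variables (d : Order.disp_t) (T : orderType d).
Implicit Types w a l : seq T.

Lemma sum_occ_uniq w l : uniq l -> \sum_(x <- l) occ w x = count (mem l) w.
Proof.
elim: l => [_ | x l IH /andP[x_l l_uniq]]; first by rewrite big_nil; elim: w.
rewrite big_cons IH // /occ -count_predUI.
rewrite (@eq_count _ (predI _ _) pred0) ?count_pred0 ?addn0 => [|y /=]; last first.
  by case: eqP => // ->; apply: negbTE.
by apply: eq_count => y; rewrite /= inE.
Qed.

Lemma sum_occ_take w a x0 j : sorted <%O a -> {subset w <= a} -> j < size a ->
  \sum_(x <- take j.+1 a) occ w x = count (<= nth x0 a j)%O w.
Proof.
move=> a_sorted w_a lt_j.
rewrite sum_occ_uniq ?take_uniq ?(lt_sorted_uniq a_sorted) //.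
apply: eq_in_count => y /w_a y_a /=; rewrite -[y in (y <= _)%O](nth_index x0 y_a).
by rewrite (in_take _ y_a) (lt_sorted_leq_nth x0 a_sorted) ?inE ?index_mem.
Qed.

Lemma sum_occ_drop w a x0 j : sorted <%O a -> {subset w <= a} -> j < size a ->
  \sum_(x <- drop j.+1 a) occ w x = count (> nth x0 a j)%O w.
Proof.
move=> a_sorted w_a lt_j.
have sum_a : \sum_(x <- a) occ w x = size w.
  rewrite sum_occ_uniq ?(lt_sorted_uniq a_sorted) // -count_predT.
  by apply: eq_in_count => y /w_a.
have := count_le_gt (nth x0 a j) w.
rewrite -(sum_occ_take x0 a_sorted w_a lt_j) -sum_a -{3}(cat_take_drop j.+1 a) big_cat /=.
lia.
Qed.

End SortedAlphabet.

Lemma special_factorization_conj_rank (d : Order.disp_t) (T : orderType d)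
    (w a : seq T) (pis : seq (seq T)) x0 j :
  perfectly_clustering w -> special_factorization w a pis -> palindromic_factors pis ->
  j < (size a).-1 ->
  conj_rank w (factor_pos pis j).+1 = count (> nth x0 a j)%O w /\
  conj_rank w (factor_pos pis j.+1) = count (<= nth x0 a j)%O w.
Proof.
move=> w_pc [a_sorted _ size_pis].
case: a a_sorted size_pis => [//|a1 a'] a_sorted size_pis def_w pal lt_j.
have le_j : j <= size a' := ltnW lt_j.
rewrite (set_nth_default a1) // -(nth_factor_pos size_pis def_w x0 le_j).
apply: (conj_rank_chain w_pc (k := size a')) => // [||i lt_i].
- by rewrite /factor_pos take0.
- exact: factor_pos_last size_pis def_w.
split.
- by rewrite (factor_pos_succ size_pis lt_i) addnS ltnS leq_addr.
- rewrite !(nth_factor_pos size_pis def_w) ?(ltnW lt_i) //.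
  by rewrite (lt_sorted_ltn_nth a1 a_sorted) ?inE //= ltnS ltnW.
- apply: (palindromic_between_factor_pos size_pis def_w x0 lt_i).
  by apply: pal; rewrite mem_nth ?size_pis.
Qed.


Theorem corollary6p3 (d : Order.disp_t) (T : orderType d)
    (w a : seq T) (pis : seq (seq T)) :
  perfectly_clustering w ->
  special_factorization w a pis ->
  palindromic_factors pis ->
  forall s : nat, 1 <= s <= (size a).-1 ->
    (nth [::] pis s.-1 = [::] <->
     \sum_(x <- take s a) occ w x = \sum_(x <- drop s a) occ w x).
Proof.
move=> w_pc fact pal s /andP[s_gt0 le_s].
have [a_sorted mem_a size_pis def_w] := fact.
case: a a_sorted mem_a size_pis def_w le_s fact => [//|x0 a'] a_sorted mem_a size_pis def_w.
rewrite -(prednK s_gt0); set j := s.-1 => lt_j fact.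
have w_a : {subset w <= x0 :: a'} by move=> y; rewrite mem_a.
have lt_j1 : j < size (x0 :: a') := ltnW lt_j.
rewrite (sum_occ_take x0) ?(sum_occ_drop x0) //.
have [<- <-] := special_factorization_conj_rank x0 w_pc fact pal lt_j.
have lt_q := factor_pos_lt size_pis def_w lt_j.
have lt_p1 : (factor_pos pis j).+1 < size w.
  by apply: leq_ltn_trans lt_q; rewrite (factor_pos_succ size_pis lt_j) addnS ltnS leq_addr.
split=> [pi_nil | /(conj_rank_inj w_pc.1 lt_q lt_p1) eq_pos].
  by congr conj_rank; apply/eqP; rewrite (factor_pos_succ_eq size_pis lt_j) pi_nil.
by apply/eqP; rewrite -(factor_pos_succ_eq size_pis lt_j) eq_pos.
Qed.
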